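(* Let $X\ge 0$ be a gamble and $a>0$. (a) If $\underline{P}$ is a 2-coherent lower prevision on $\{X, I_{(X\ge a)}\}$, then $\underline{P}(X\ge a)\le \underline{P}(X)/a$. (b) If $\overline{P}$ is a 2-coherent upper prevision on $\{X, I_{(X\ge a)}\}$, then $\overline{P}(X\ge a)\le \overline{P}(X)/a$.
   Context: $\Pi$ is a partition of the sure event into pairwise disjoint non-impossible events; a gamble is a bounded map $X:\Pi\to\mathbb{R}$. $(X\ge a)$ is the event $\{\omega: X(\omega)\ge a\}$ with indicator $I_{(X\ge a)}$, and $\underline{P}(X\ge a)$ means $\underline{P}(I_{(X\ge a)})$ (similarly for $\overline{P}$). A lower prevision $\underline{P}$ on $\mathcal{D}$ is 2-coherent iff for all $X_0,X_1\in\mathcal{D}$, $s_1\ge 0$, $s_0\in\mathbb{R}$, $\sup[s_1(X_1-\underline{P}(X_1))-s_0(X_0-\underline{P}(X_0))]\ge 0$. An upper prevision $\overline{P}$ on $\mathcal{D}$ is 2-coherent iff for all $X_0,X_1\in\mathcal{D}$, $s_1\ge 0$, $s_0\in\mathbb{R}$, $\sup[s_1(\overline{P}(X_1)-X_1)-s_0(\overline{P}(X_0)-X_0)]\ge 0$. *)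

(* R : realType, the partition Pi is a type T. *)
From HB Require Import structures.
From mathcomp Require Import all_boot all_order all_algebra.
From mathcomp Require Import all_classical all_reals.
Set Implicit Arguments. Unset Strict Implicit. Unset Printing Implicit Defensive.
Import Order.TTheory GRing.Theory Num.Theory.
Local Open Scope classical_set_scope.
Local Open Scope ring_scope.

Section Defs.
Variables (R : realType) (T : Type).

Definition bounded_gamble (X : T -> R) : Prop :=
  exists M : R, forall w, `|X w| <= M.

Definition indic_ge (X : T -> R) (a : R) : T -> R :=
  fun w => if a <= X w then 1 else 0.

Definition gsup (f : T -> R) : R := sup (range f).

Definition coherent2_lower (D : set (T -> R)) (P : (T -> R) -> R) : Prop :=
  forall X0 X1, D X0 -> D X1 -> forall s1 s0 : R, 0 <= s1 ->
    0 <= gsup (fun w => s1 * (X1 w - P X1) - s0 * (X0 w - P X0)).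

Definition coherent2_upper (D : set (T -> R)) (P : (T -> R) -> R) : Prop :=
  forall X0 X1, D X0 -> D X1 -> forall s1 s0 : R, 0 <= s1 ->
    0 <= gsup (fun w => s1 * (P X1 - X1 w) - s0 * (P X0 - X0 w)).

End Defs.

From HB Require Import structures.
From mathcomp Require Import all_boot all_order all_algebra.
From mathcomp Require Import all_classical all_reals.
From mathcomp Require Import lra.
Set Implicit Arguments. Unset Strict Implicit.
Import Order.TTheory GRing.Theory Num.Theory.
Local Open Scope classical_set_scope.
Local Open Scope ring_scope.

(* Markov's inequality holds pointwise: I_(X >= a) <= X / a when X >= 0.
   A 2-coherent lower or upper prevision turns a pointwise domination
   Y <= s Z between two gambles of its domain into P Y <= s P Z: apply
   2-coherence to the pair (Y, Z) with the weights 1 and s, and bound the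
   supremum of the resulting gamble by s P Z - P Y. *)

Section TwoCoherence.
Variables (R : realType) (T : Type).
Hypothesis T_inhabited : inhabited T.

Lemma gsup_le (f : T -> R) (c : R) : (forall w, f w <= c) -> gsup f <= c.
Proof.
move=> f_le_c; apply: ge_sup; first by case: T_inhabited => w; exists (f w), w.
by move=> _ [w _ <-]; apply: f_le_c.
Qed.

Lemma coherent2_lower_le_scale (D : set (T -> R)) (P : (T -> R) -> R)
    (Y Z : T -> R) (s : R) :
  coherent2_lower D P -> D Y -> D Z -> (forall w, Y w <= s * Z w) ->
  P Y <= s * P Z.
Proof.
move=> cohP DY DZ Y_le; rewrite -subr_ge0.
apply: (le_trans (cohP Z Y DZ DY 1 s ler01)); apply: gsup_le => w.
by have := Y_le w; rewrite mul1r mulrBr; lra.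
Qed.

Lemma coherent2_upper_le_scale (D : set (T -> R)) (P : (T -> R) -> R)
    (Y Z : T -> R) (s : R) :
  coherent2_upper D P -> D Y -> D Z -> 0 <= s -> (forall w, Y w <= s * Z w) ->
  P Y <= s * P Z.
Proof.
move=> cohP DY DZ s_ge0 Y_le; rewrite -subr_ge0.
apply: (le_trans (cohP Y Z DY DZ s 1 s_ge0)); apply: gsup_le => w.
by have := Y_le w; rewrite mul1r mulrBr; lra.
Qed.

End TwoCoherence.

Lemma indic_ge_le_scale (R : realType) (T : Type) (X : T -> R) (a : R) (w : T) :
  0 <= X w -> 0 < a -> indic_ge X a w <= a^-1 * X w.
Proof.
move=> X_ge0 a_gt0; rewrite /indic_ge mulrC; case: ifP => a_le_X.
  by rewrite ler_pdivlMr // mul1r.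
by rewrite divr_ge0 // ltW.
Qed.

Theorem proposition2 (R : realType) (T : Type) (HT : inhabited T)
  (X : T -> R) (a : R) :
  bounded_gamble X -> (forall w, 0 <= X w) -> 0 < a ->
  (forall P : (T -> R) -> R,
     coherent2_lower (fun Y => Y = X \/ Y = indic_ge X a) P ->
     P (indic_ge X a) <= P X / a) /\
  (forall P : (T -> R) -> R,
     coherent2_upper (fun Y => Y = X \/ Y = indic_ge X a) P ->
     P (indic_ge X a) <= P X / a).
Proof.
move=> _ X_ge0 a_gt0.
have markov w : indic_ge X a w <= a^-1 * X w by exact: indic_ge_le_scale.
have inva_ge0 : 0 <= a^-1 by rewrite invr_ge0 ltW.
split=> P cohP; rewrite mulrC.
- by apply: (coherent2_lower_le_scale HT cohP) (markov); [right | left].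
- by apply: (coherent2_upper_le_scale HT cohP) inva_ge0 (markov); [right | left].
Qed.
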